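(* Let $K\ge 2$, $T\ge 1$, $\delta\in(0,1/K]$, $c>0$, $\eta_0>0$, $c_\eta>0$. For $t=1,\dots,T$ let $\mathbf z_t\in\Delta^{K-1}$ and $\widetilde f_t\in\mathbb R$ with $|\widetilde f_t|\le c$, and set $\mathbf g_t:=-\widetilde f_t\mathbf z_t$ and $\ell_t(\mathbf w):=\mathbf g_t^\top\mathbf w=-\widetilde f_t\,\mathbf w^\top\mathbf z_t$. Let $\widehat{\mathbf w}_1=(1/K,\dots,1/K)$ and, for $t=1,\dots,T$, $$\widehat{\mathbf w}_{t+1}:=\arg\min_{\mathbf w\in\Delta^{K-1}}\Big\{\eta_t\,\mathbf g_t^\top\mathbf w+\mathrm{KL}(\mathbf w\,\|\,\widehat{\mathbf w}_t)\Big\},\qquad \eta_t:=\frac{\eta_0}{\sqrt{1+c_\eta t}}.$$ Let $\mathbf w_1,\dots,\mathbf w_T\in\Delta^{K-1}$ be a comparator sequence. Assume that all $\mathbf w_t$ ($t=1,\dots,T$) and all iterates $\widehat{\mathbf w}_t$ ($t=1,\dots,T+1$) lie in $\Delta^{K-1}_\delta$. Define $V_T:=\sum_{t=2}^T\|\mathbf w_t-\mathbf w_{t-1}\|_1$, $L_\delta:=1+\log(1/\delta)$ and the dynamic regret $R_T^{\mathrm{dyn}}:=\sum_{t=1}^T\ell_t(\widehat{\mathbf w}_t)-\sum_{t=1}^T\ell_t(\mathbf w_t)$. Then $$R_T^{\mathrm{dyn}}\le\sqrt{1+c_\eta T}\left(\frac{\log(1/\delta)+L_\delta V_T}{\eta_0}+\frac{c^2\eta_0}{c_\eta}\right).$$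 In particular, if $\eta_0=\sqrt{c_\eta(\log(1/\delta)+L_\delta V_T)}/c$, then $R_T^{\mathrm{dyn}}\le 2c\sqrt{\frac{\log(1/\delta)+L_\delta V_T}{c_\eta}}\sqrt{1+c_\eta T}$.
   Context: $\Delta^{K-1}:=\{\mathbf x\in\mathbb R^K_{\ge0}:\sum_k x_k=1\}$ is the probability simplex; $\Delta^{K-1}_\delta:=\{\mathbf w\in\Delta^{K-1}:w_k\ge\delta\ \forall k\}$ is the truncated simplex. $\mathrm{KL}(\mathbf u\|\mathbf w):=\sum_{k=1}^K u_k\log(u_k/w_k)$ (with $0\log 0=0$), which is the Bregman divergence of the negative entropy $d(\mathbf w)=\sum_k w_k\log w_k$. *)

From HB Require Import structures.
From mathcomp Require Import all_boot all_order all_algebra.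
From mathcomp Require Import all_classical all_reals all_analysis.
Set Implicit Arguments. Unset Strict Implicit. Unset Printing Implicit Defensive.
Import Order.TTheory GRing.Theory Num.Theory.
Local Open Scope ring_scope.

Definition in_simplex (R : realType) (K : nat) (x : 'I_K -> R) : Prop :=
  (forall k, 0 <= x k) /\ \sum_(k < K) x k = 1.

Definition in_trunc_simplex (R : realType) (K : nat) (delta : R) (x : 'I_K -> R) : Prop :=
  in_simplex x /\ (forall k, delta <= x k).

Definition KL (R : realType) (K : nat) (u w : 'I_K -> R) : R :=
  \sum_(k < K) (if u k == 0 then 0 else u k * ln (u k / w k)).

Definition dotp (R : realType) (K : nat) (a b : 'I_K -> R) : R :=
  \sum_(k < K) a k * b k.

Definition l1dist (R : realType) (K : nat) (a b : 'I_K -> R) : R :=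
  \sum_(k < K) `|a k - b k|.

Definition is_argmin_simplex (R : realType) (K : nat) (F : ('I_K -> R) -> R)
  (x : 'I_K -> R) : Prop :=
  in_simplex x /\ (forall y, in_simplex y -> F x <= F y).

From mathcomp Require Import all_boot all_order all_algebra.
From mathcomp Require Import all_classical all_reals all_analysis.
From mathcomp Require Import ring lra zify.
Import Order.TTheory GRing.Theory Num.Theory.
Local Open Scope ring_scope.

(* Each entropic mirror-descent step is a Gibbs reweighting: by Gibbs' variational
   principle the objective equals [KL (. || gibbs) - ln Z], so its minimiser is
   [what (t+1) k = what t k * expR (- eta t * g t k) / Z].  This gives the one-step
   bound [<g t, what t - u> <= (KL (u || what t) - KL (u || what (t+1))) / eta t
   + eta t * c ^+ 2 / 2], the last term by Hoeffding's lemma.  Summed with the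
   nondecreasing weights [1 / eta t], the KL terms telescope up to the drifts
   [KL (w t || what t) - KL (w (t-1) || what t) <= L_delta * |w t - w (t-1)|_1],
   every KL against a point of the truncated simplex is at most [ln (1/delta)],
   and [sum_t eta t <= 2 * eta0 * sqrt (1 + c_eta * T) / c_eta]. *)

Section RealInequalities.
Set Implicit Arguments. Unset Strict Implicit.
Variable R : realType.
Implicit Types a b q x y : R.

Lemma ln_le_subr1 y : 0 < y -> ln y <= y - 1.
Proof. by move=> y0; have := expR_ge1Dx (ln y); rewrite lnK ?posrE //; lra. Qed.

Lemma ln_lt_subr1 y : 0 < y -> y != 1 -> ln y < y - 1.
Proof.
move=> y0 y1; have := @expR_gt1Dx R (ln y).
by rewrite ln_eq0 // y1 lnK ?posrE // => /(_ isT); lra.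
Qed.

Lemma mul_ln_gap_ge0 a b : 0 < a -> 0 < b -> 0 <= a * (b / a - 1 - ln (b / a)).
Proof.
move=> a0 b0; apply: mulr_ge0; first exact: ltW.
by rewrite subr_ge0 ln_le_subr1 // divr_gt0.
Qed.

Lemma expR_ge_taylor3 x : 0 <= x -> 1 + x + x ^+ 2 / 2 + x ^+ 3 / 6 <= expR x.
Proof.
move=> x0; rewrite /expR.
have coeff_ge0 n : (0 <= n)%N -> predT n -> 0 <= exp_coeff x n.
  by move=> _ _; exact: exp_coeff_ge0.
apply: le_trans (nondecreasing_cvgn_le
  (nondecreasing_series (P := predT) coeff_ge0) (is_cvg_series_exp_coeff x) 4).
rewrite /series /= /exp_coeff /= !big_nat_recr //= big_nil.
have -> : (3`!)%:R = 6 :> R by [].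
have -> : (2`!)%:R = 2 :> R by [].
rewrite expr0 expr1 !divr1; lra.
Qed.

Lemma expRN_le_taylor2 x : 0 <= x -> expR (- x) <= 1 - x + x ^+ 2 / 2.
Proof.
move=> x0; set P := 1 - x + x ^+ 2 / 2.
have P0 : 0 < P by rewrite /P; nra.
have PQ_ge1 : 1 <= P * (1 + x + x ^+ 2 / 2 + x ^+ 3 / 6).
  have -> : P * (1 + x + x ^+ 2 / 2 + x ^+ 3 / 6)
          = 1 + x ^+ 3 / 6 + x ^+ 4 / 12 + x ^+ 5 / 12 by rewrite /P; field.
  have := exprn_ge0 3 x0; have := exprn_ge0 4 x0; have := exprn_ge0 5 x0; lra.
have PexpR_ge1 : 1 <= P * expR x.
  by apply: le_trans PQ_ge1 _; rewrite ler_pM2l // expR_ge_taylor3.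
by rewrite -(ler_pM2r (expR_gt0 x)) mulrC expRxMexpNx_1.
Qed.

(* Gradient inequality for the convex map [x |-> x * ln (x / q)]. *)
Lemma mul_ln_div_subr_le a b q : 0 < a -> 0 < b -> 0 < q ->
  a * ln (a / q) - b * ln (b / q) <= (ln (a / q) + 1) * (a - b).
Proof.
move=> a0 b0 q0; have := ln_le_subr1 (divr_gt0 a0 b0).
have ba : b * (a / b) = a by rewrite mulrC divfK // gt_eqF.
rewrite !ln_div ?posrE //; nra.
Qed.

Lemma invr_sqrt_le_sub a y : 0 < a -> 0 <= y ->
  (Num.sqrt (y + a))^-1 <= 2 * (Num.sqrt (y + a) - Num.sqrt y) / a.
Proof.
move=> a0 y0; set X := Num.sqrt (y + a); set Y := Num.sqrt y.
have X0 : 0 < X by rewrite sqrtr_gt0; lra.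
have Y0 : 0 <= Y by exact: sqrtr_ge0.
have X2 : X ^+ 2 = y + a by rewrite sqr_sqrtr //; lra.
have Y2 : Y ^+ 2 = y by rewrite sqr_sqrtr.
rewrite ler_pdivlMr // -(ler_pM2l X0) mulrA mulfV ?gt_eqF // mul1r.
have := sqr_ge0 (X - Y); nra.
Qed.

Lemma sqrt_schedule_gt0 a (t : nat) : 0 < a -> 0 < Num.sqrt (1 + a * t%:R).
Proof. by move=> a0; rewrite sqrtr_gt0 ltr_pwDl // mulr_ge0 // ltW. Qed.

Lemma step_schedule_noninc e a (s t : nat) : 0 < e -> 0 < a -> (s <= t)%N ->
  e / Num.sqrt (1 + a * t%:R) <= e / Num.sqrt (1 + a * s%:R).
Proof.
move=> e0 a0 st; rewrite ler_pM2l // lef_pV2 ?posrE ?sqrt_schedule_gt0 //.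
rewrite ler_sqrt; last by rewrite ltW // ltr_pwDl // mulr_ge0 // ltW.
by rewrite lerD2l ler_pM2l // ler_nat.
Qed.

Lemma sum_inv_sqrt_le a n : 0 < a ->
  \sum_(1 <= t < n.+1) (Num.sqrt (1 + a * t%:R))^-1
    <= 2 * Num.sqrt (1 + a * n%:R) / a.
Proof.
move=> a0; elim: n => [|n IH].
  by rewrite big_geq // mulr0 addr0 sqrtr1 mulr1 divr_ge0 // ltW.
rewrite big_nat_recr //= mulrSr mulrDr addrA.
have n_ge0 : 0 <= 1 + a * n%:R by rewrite addr_ge0 // mulr_ge0 // ltW.
have := invr_sqrt_le_sub a0 n_ge0; rewrite mulr1; lra.
Qed.

Lemma weighted_telescope_le (a A B d : nat -> R) (L Ld : R) (N : nat) :
  (forall t, 0 <= a t) -> (forall s t, (s <= t)%N -> a s <= a t) ->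
  (forall t, (1 <= t < N)%N -> B t <= L) -> A 1%N <= L ->
  (forall t, (2 <= t <= N)%N -> A t <= B t.-1 + Ld * d t) -> (1 <= N)%N ->
  \sum_(1 <= t < N.+1) a t * (A t - B t)
    <= a N * (L - B N) + Ld * \sum_(2 <= t < N.+1) a t * d t.
Proof.
move=> a_ge0 a_mono B_le A1_le A_le N_gt0.
suff : forall n, (1 <= n <= N)%N -> \sum_(1 <= t < n.+1) a t * (A t - B t)
          <= a n * (L - B n) + Ld * \sum_(2 <= t < n.+1) a t * d t.
  by apply; rewrite N_gt0 leqnn.
elim=> [//|[|n] IH] n_le.
  by rewrite big_nat1 big_geq // mulr0 addr0 ler_wpM2l //; lra.
rewrite big_nat_recr //= [X in _ <= _ + Ld * X]big_nat_recr //=.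
have step : a n.+2 * (A n.+2 - B n.+2) <= a n.+2 * (B n.+1 + Ld * d n.+2 - B n.+2).
  by rewrite ler_wpM2l //; have := A_le n.+2 ltac:(lia); lra.
have reweight : a n.+1 * (L - B n.+1) + a n.+2 * B n.+1 <= a n.+2 * L.
  have := a_mono n.+1 n.+2 (leqnSn _); have := B_le n.+1 ltac:(lia); nra.
have := IH ltac:(lia); lra.
Qed.

Lemma balanced_rate_eq (X c e ce : R) : 0 < c -> 0 < ce -> 0 < e ->
  e = Num.sqrt (ce * X) / c -> X / e + c ^+ 2 * e / ce = 2 * c * Num.sqrt (X / ce).
Proof.
move=> c0 ce0 e0 eE.
have X0 : 0 < X.
  rewrite ltNge; apply/negP => X_le0.
  by move: e0; rewrite eE ler0_sqrtr ?mul0r ?ltxx //; nra.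
set r := Num.sqrt (X / ce).
have r0 : 0 < r by rewrite sqrtr_gt0 divr_gt0.
have r2 : r ^+ 2 = X / ce by rewrite sqr_sqrtr // divr_ge0 // ltW.
have XE : X = ce * r ^+ 2 by rewrite r2 mulrC divfK // gt_eqF.
have sqrtE : Num.sqrt (ce * X) = ce * r.
  by rewrite XE mulrA -expr2 -exprMn sqrtr_sqr ger0_norm // mulr_ge0 // ltW.
by rewrite eE sqrtE XE; field; rewrite !gt_eqF.
Qed.

End RealInequalities.

Section KullbackLeibler.
Set Implicit Arguments. Unset Strict Implicit.
Variables (R : realType) (K : nat).
Implicit Types (u v p q x y g : 'I_K -> R) (delta e : R).

Lemma simplex_le1 u : in_simplex u -> forall k, u k <= 1.
Proof. by move=> [u_ge0 <-] k; rewrite (bigD1 k) //= lerDl sumr_ge0. Qed.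

Lemma scaled_simplex_range (z : 'I_K -> R) (f c : R) : in_simplex z -> `|f| <= c ->
  exists m, forall k, m <= - f * z k <= m + c.
Proof.
move=> hz f_le; have z01 k : 0 <= z k <= 1 by rewrite hz.1 simplex_le1.
have [f_ge0 | f_lt0] := leP 0 f.
  exists (- f) => k; have /andP[z0 z1] := z01 k.
  by rewrite ger0_norm // in f_le; apply/andP; split; nra.
exists 0 => k; have /andP[z0 z1] := z01 k.
by rewrite ltr0_norm // in f_le; apply/andP; split; nra.
Qed.

Lemma trunc_simplex_gt0 delta u : 0 < delta -> in_trunc_simplex delta u ->
  forall k, 0 < u k.
Proof. by move=> delta0 [_ u_ge] k; apply: lt_le_trans (u_ge k). Qed.

Lemma KLE u p : (forall k, 0 < u k) -> KL u p = \sum_(k < K) u k * ln (u k / p k).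
Proof. by move=> u0; apply: eq_bigr => k _; rewrite gt_eqF. Qed.

Lemma KLxx u : KL u u = 0.
Proof.
by apply: big1 => k _; case: eqP => // /eqP uk0; rewrite divff // ln1 mulr0.
Qed.

Lemma KL_simplexE u q : in_simplex u -> in_simplex q ->
  (forall k, 0 < u k) -> (forall k, 0 < q k) ->
  KL u q = \sum_(k < K) u k * (q k / u k - 1 - ln (q k / u k)).
Proof.
move=> [_ u1] [_ q1] u0 q0.
have -> : \sum_(k < K) u k * (q k / u k - 1 - ln (q k / u k))
        = \sum_(k < K) (q k - u k) + \sum_(k < K) u k * ln (u k / q k).
  rewrite -big_split; apply: eq_bigr => k _ /=.
  by rewrite !ln_div ?posrE //; field; rewrite gt_eqF.
by rewrite sumrB u1 q1 subrr add0r KLE.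
Qed.

Lemma KL_ge0 u q : in_simplex u -> in_simplex q ->
  (forall k, 0 < u k) -> (forall k, 0 < q k) -> 0 <= KL u q.
Proof.
move=> hu hq u0 q0; rewrite KL_simplexE //.
by apply: sumr_ge0 => k _; exact: mul_ln_gap_ge0.
Qed.

Lemma KL_eq0 u q : in_simplex u -> in_simplex q ->
  (forall k, 0 < u k) -> (forall k, 0 < q k) -> KL u q = 0 -> u = q.
Proof.
move=> hu hq u0 q0.
have gap_ge0 k : true -> 0 <= u k * (q k / u k - 1 - ln (q k / u k)).
  by move=> _; exact: mul_ln_gap_ge0.
rewrite KL_simplexE // => /(psumr_eq0P gap_ge0) gap0.
apply/funext => k; move/eqP: (gap0 k isT).
rewrite mulf_eq0 (gt_eqF (u0 k)) /= => /eqP gap.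
case: (eqVneq (q k / u k) 1) => [qu1 | qu_neq1].
  by rewrite -[q k](divfK (lt0r_neq0 (u0 k))) qu1 mul1r.
by have := ln_lt_subr1 (divr_gt0 (q0 k) (u0 k)) qu_neq1; lra.
Qed.

Lemma KL_le_ln_inv delta u p : in_simplex u -> (forall k, 0 < u k) ->
  0 < delta -> (forall k, delta <= p k) -> KL u p <= ln delta^-1.
Proof.
move=> hu u0 delta0 p_ge; rewrite KLE //.
apply: le_trans (_ : _ <= \sum_(k < K) u k * ln delta^-1) _; last first.
  by rewrite -mulr_suml hu.2 mul1r.
apply: ler_sum => k _; apply: ler_wpM2l; first exact: ltW.
have p0 : 0 < p k by apply: lt_le_trans (p_ge k).
have := ln_le0 (simplex_le1 hu k).
have : ln delta <= ln (p k) by rewrite ler_ln ?posrE.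
by rewrite ln_div ?lnV ?posrE //; lra.
Qed.

Lemma KL_sub_le_l1dist delta u v p : 0 < delta ->
  in_trunc_simplex delta u -> in_trunc_simplex delta v -> in_trunc_simplex delta p ->
  KL u p - KL v p <= (1 + ln delta^-1) * l1dist u v.
Proof.
move=> delta0 hu hv hp.
have u0 := trunc_simplex_gt0 delta0 hu; have v0 := trunc_simplex_gt0 delta0 hv.
have p0 := trunc_simplex_gt0 delta0 hp.
rewrite !KLE // /l1dist mulr_sumr -sumrB; apply: ler_sum => k _.
apply: le_trans (mul_ln_div_subr_le (u0 k) (v0 k) (p0 k)) _.
apply: le_trans (ler_norm _) _; rewrite normrM ler_wpM2r //.
have := ln_le0 (simplex_le1 hu.1 k); have := ln_le0 (simplex_le1 hp.1 k).
have : ln delta <= ln (u k) by rewrite ler_ln ?posrE ?hu.2.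
have : ln delta <= ln (p k) by rewrite ler_ln ?posrE ?hp.2.
rewrite ler_norml ln_div ?lnV ?posrE //; lra.
Qed.

End KullbackLeibler.

Section GibbsMirrorStep.
Set Implicit Arguments. Unset Strict Implicit.
Variables (R : realType) (K : nat).
Implicit Types (u p x y g : 'I_K -> R) (e : R).

Definition gibbs_norm p g e := \sum_(k < K) p k * expR (- (e * g k)).

Definition gibbs p g e : 'I_K -> R :=
  fun k => p k * expR (- (e * g k)) / gibbs_norm p g e.

Lemma gibbs_norm_gt0 p g e : in_simplex p -> 0 < gibbs_norm p g e.
Proof.
move=> [p_ge0 p1].
have term_ge0 k : true -> 0 <= p k * expR (- (e * g k)).
  by move=> _; rewrite mulr_ge0 ?expR_ge0.
rewrite lt_def sumr_ge0 // andbT; apply/eqP => /(psumr_eq0P term_ge0) norm0.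
move: p1; rewrite big1 => [/eqP|k _]; first by rewrite eq_sym oner_eq0.
by move/eqP: (norm0 k isT); rewrite mulf_eq0 expR_eq0 orbF => /eqP.
Qed.

Lemma gibbs_simplex p g e : in_simplex p -> in_simplex (gibbs p g e).
Proof.
move=> hp; have Z0 := gibbs_norm_gt0 g e hp; split.
  by move=> k; rewrite divr_ge0 ?mulr_ge0 ?expR_ge0 ?hp.1 // ltW.
by rewrite -mulr_suml divff // gt_eqF.
Qed.

Lemma gibbs_gt0 p g e : in_simplex p -> (forall k, 0 < p k) ->
  forall k, 0 < gibbs p g e k.
Proof.
by move=> hp p0 k; rewrite divr_gt0 ?mulr_gt0 ?expR_gt0 ?gibbs_norm_gt0.
Qed.

Lemma ln_gibbs_div p g e k : in_simplex p -> (forall k, 0 < p k) ->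
  ln (gibbs p g e k / p k) = - (e * g k) - ln (gibbs_norm p g e).
Proof.
move=> hp p0; have Z0 := gibbs_norm_gt0 g e hp.
have -> : gibbs p g e k / p k = expR (- (e * g k)) / gibbs_norm p g e.
  by rewrite /gibbs; field; rewrite !gt_eqF.
by rewrite ln_div ?posrE ?expR_gt0 // expRK.
Qed.

Lemma mirror_objective_gibbs p g e y : in_simplex p -> (forall k, 0 < p k) ->
  in_simplex y -> (forall k, 0 < y k) ->
  e * dotp g y + KL y p = KL y (gibbs p g e) - ln (gibbs_norm p g e).
Proof.
move=> hp p0 hy y0; have q0 := gibbs_gt0 g e hp p0.
rewrite !KLE // /dotp mulr_sumr -big_split /=.
rewrite -[X in _ = _ - X]mulr1 -hy.2 mulr_sumr -sumrB; apply: eq_bigr => k _.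
have -> : ln (y k / p k) = ln (y k / gibbs p g e k) + ln (gibbs p g e k / p k).
  move: (q0 k); move: (gibbs p g e k) => qk qk0.
  by rewrite !ln_div ?posrE //; ring.
by rewrite ln_gibbs_div //; ring.
Qed.

Lemma argmin_mirror_stepE p g e x : in_simplex p -> (forall k, 0 < p k) ->
  (forall k, 0 < x k) -> is_argmin_simplex (fun y => e * dotp g y + KL y p) x ->
  x = gibbs p g e.
Proof.
move=> hp p0 x0 [hx x_min].
have hq := gibbs_simplex g e hp; have q0 := gibbs_gt0 g e hp p0.
have := x_min _ hq; rewrite !mirror_objective_gibbs // KLxx => KL_le0.
by apply: KL_eq0 => //; apply/le_anti; rewrite KL_ge0 // andbT; lra.
Qed.

Lemma ln_gibbs_norm_le p g e m c : in_simplex p -> 0 <= e ->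
  (forall k, m <= g k <= m + c) ->
  ln (gibbs_norm p g e) + e * dotp g p <= e ^+ 2 * c ^+ 2 / 2.
Proof.
(* Shifting [g] by [m] does not change the left-hand side, and for [0 <= g <= c]
   the bound [expR (- x) <= 1 - x + x ^+ 2 / 2] applies termwise. *)
move=> hp e0 g_range; set h := fun k => g k - m.
have normE : gibbs_norm p g e = gibbs_norm p h e * expR (- (e * m)).
  rewrite /gibbs_norm mulr_suml; apply: eq_bigr => k _.
  by rewrite -mulrA -expRD /h; congr (_ * expR _); ring.
have dotE : dotp g p = dotp h p + m.
  rewrite /dotp /h /=.
  have -> : \sum_(k < K) (g k - m) * p k
          = \sum_(k < K) g k * p k - m * \sum_(k < K) p k.
    by rewrite mulr_sumr -sumrB; apply: eq_bigr => k _; ring.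
  by rewrite hp.2 mulr1 subrK.
rewrite normE lnM ?posrE ?gibbs_norm_gt0 ?expR_gt0 // expRK dotE.
suff : gibbs_norm p h e <= 1 - e * dotp h p + e ^+ 2 * c ^+ 2 / 2.
  by have := ln_le_subr1 (gibbs_norm_gt0 h e hp); lra.
have -> : 1 - e * dotp h p + e ^+ 2 * c ^+ 2 / 2
        = \sum_(k < K) (p k - e * (h k * p k) + e ^+ 2 * c ^+ 2 / 2 * p k).
  by rewrite !big_split /= sumrN -!mulr_sumr hp.2 /dotp; ring.
apply: ler_sum => k _; have /andP[mg gc] := g_range k.
have eh_ge0 : 0 <= e * h k by rewrite mulr_ge0 // subr_ge0.
have eh_le : e * h k <= e * c.
  by apply: ler_wpM2l => //; rewrite /h lerBlDl.
have sq_le : (e * h k) ^+ 2 <= e ^+ 2 * c ^+ 2.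
  by rewrite -exprMn !expr2 ler_pM.
have := expRN_le_taylor2 eh_ge0; have := hp.1 k; nra.
Qed.

Lemma mirror_step_regret p x u g e c : in_simplex p -> (forall k, 0 < p k) ->
  in_simplex u -> (forall k, 0 < u k) -> (forall k, 0 < x k) -> 0 < e ->
  (exists m, forall k, m <= g k <= m + c) ->
  is_argmin_simplex (fun y => e * dotp g y + KL y p) x ->
  dotp g p - dotp g u <= (KL u p - KL u x) / e + e * c ^+ 2 / 2.
Proof.
move=> hp p0 hu u0 x0 e0 [m g_range] x_min.
rewrite (argmin_mirror_stepE hp p0 x0 x_min).
have KL_gap := mirror_objective_gibbs g e hp p0 hu u0.
have norm_le := ln_gibbs_norm_le hp (ltW e0) g_range.
rewrite -(ler_pM2l e0) !mulrDr [e * (_ / e)]mulrC divfK ?gt_eqF //.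
lra.
Qed.

End GibbsMirrorStep.

Section DynamicRegret.
Set Implicit Arguments. Unset Strict Implicit.
Variables (R : realType) (K T : nat) (delta c : R) (eta : nat -> R).
Variables (g : nat -> 'I_K -> R) (what w : nat -> 'I_K -> R).
Hypotheses (T_gt0 : (0 < T)%N) (delta_gt0 : 0 < delta) (delta_le1 : delta <= 1).
Hypothesis eta_gt0 : forall t, 0 < eta t.
Hypothesis eta_noninc : forall s t, (s <= t)%N -> eta t <= eta s.
Hypothesis g_range : forall t, (1 <= t <= T)%N ->
  exists m, forall k, m <= g t k <= m + c.
Hypothesis what_argmin : forall t, (1 <= t <= T)%N ->
  is_argmin_simplex (fun x => eta t * dotp (g t) x + KL x (what t)) (what t.+1).
Hypothesis w_trunc : forall t, (1 <= t <= T)%N -> in_trunc_simplex delta (w t).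
Hypothesis what_trunc : forall t, (1 <= t <= T.+1)%N -> in_trunc_simplex delta (what t).

Let w_gt0 t (ht : (1 <= t <= T)%N) := trunc_simplex_gt0 delta_gt0 (w_trunc ht).
Let what_gt0 t (ht : (1 <= t <= T.+1)%N) :=
  trunc_simplex_gt0 delta_gt0 (what_trunc ht).

Let KL_w_what_le t s : (1 <= t <= T)%N -> (1 <= s <= T.+1)%N ->
  KL (w t) (what s) <= ln delta^-1.
Proof.
by move=> ht hs; exact: KL_le_ln_inv (w_trunc ht).1 (w_gt0 ht) delta_gt0
  (what_trunc hs).2.
Qed.

Let KL_drift_le t : (2 <= t <= T)%N ->
  KL (w t) (what t) - KL (w t.-1) (what t) <= (1 + ln delta^-1) * l1dist (w t) (w t.-1).
Proof.
by move=> ht; apply: KL_sub_le_l1dist delta_gt0 _ _ _;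
  [apply: w_trunc | apply: w_trunc | apply: what_trunc]; lia.
Qed.

Lemma sum_mirror_step_regret_le :
  \sum_(1 <= t < T.+1) dotp (g t) (what t) - \sum_(1 <= t < T.+1) dotp (g t) (w t)
  <= \sum_(1 <= t < T.+1) (eta t)^-1 * (KL (w t) (what t) - KL (w t) (what t.+1))
     + c ^+ 2 / 2 * \sum_(1 <= t < T.+1) eta t.
Proof.
rewrite -sumrB mulr_sumr -big_split; apply: ler_sum_nat => t ht /=.
have ht' : (1 <= t <= T.+1)%N by lia.
rewrite [leRHS](_ : _ = (KL (w t) (what t) - KL (w t) (what t.+1)) / eta t
                        + eta t * c ^+ 2 / 2); last by ring.
exact: mirror_step_regret (what_trunc ht').1 (what_gt0 ht') (w_trunc ht).1
  (w_gt0 ht) (what_gt0 (ltac:(lia) : (1 <= t.+1 <= T.+1)%N)) (eta_gt0 t)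
  (g_range ht) (what_argmin ht).
Qed.

Lemma KL_weighted_telescope_le :
  \sum_(1 <= t < T.+1) (eta t)^-1 * (KL (w t) (what t) - KL (w t) (what t.+1))
  <= (ln delta^-1 + (1 + ln delta^-1) * \sum_(2 <= t < T.+1) l1dist (w t) (w t.-1))
       / eta T.
Proof.
set L := ln delta^-1; set V := \sum_(2 <= t < T.+1) _.
have L_ge0 : 0 <= L by rewrite ln_ge0 // invf_ge1.
have inv_eta_ge0 t : 0 <= (eta t)^-1 by rewrite invr_ge0 ltW.
have inv_eta_mono s t : (s <= t)%N -> (eta s)^-1 <= (eta t)^-1.
  by move=> st; rewrite lef_pV2 ?posrE // eta_noninc.
have B_le t : (1 <= t < T)%N -> KL (w t) (what t.+1) <= L.
  by move=> ht; apply: KL_w_what_le; lia.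
have A1_le : KL (w 1%N) (what 1%N) <= L by apply: KL_w_what_le; lia.
have A_drift t : (2 <= t <= T)%N -> KL (w t) (what t)
    <= KL (w t.-1) (what t.-1.+1) + (1 + L) * l1dist (w t) (w t.-1).
  by move=> ht; rewrite prednK; [have := KL_drift_le ht; rewrite -/L; lra | lia].
have := @weighted_telescope_le R (fun t => (eta t)^-1)
  (fun t => KL (w t) (what t)) (fun t => KL (w t) (what t.+1))
  (fun t => l1dist (w t) (w t.-1)) L (1 + L) T inv_eta_ge0 inv_eta_mono
  B_le A1_le A_drift T_gt0.
have BT_ge0 : 0 <= KL (w T) (what T.+1).
  have hT : (1 <= T <= T)%N by rewrite T_gt0 leqnn.
  have hT1 : (1 <= T.+1 <= T.+1)%N by rewrite leqnn.
  exact: KL_ge0 (w_trunc hT).1 (what_trunc hT1).1 (w_gt0 hT) (what_gt0 hT1).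
have drift_le : \sum_(2 <= t < T.+1) (eta t)^-1 * l1dist (w t) (w t.-1)
    <= (eta T)^-1 * V.
  rewrite /V mulr_sumr; apply: ler_sum_nat => t ht.
  by rewrite ler_wpM2r ?inv_eta_mono //; [apply: sumr_ge0 => k _ | lia].
have : (1 + L) * \sum_(2 <= t < T.+1) (eta t)^-1 * l1dist (w t) (w t.-1)
    <= (1 + L) * ((eta T)^-1 * V) by rewrite ler_wpM2l //; lra.
have : (eta T)^-1 * (L - KL (w T) (what T.+1)) <= (eta T)^-1 * L.
  by rewrite ler_wpM2l //; lra.
have -> : (L + (1 + L) * V) / eta T = (eta T)^-1 * L + (1 + L) * ((eta T)^-1 * V).
  by ring.
lra.
Qed.

Lemma dynamic_regret_le :
  \sum_(1 <= t < T.+1) dotp (g t) (what t) - \sum_(1 <= t < T.+1) dotp (g t) (w t)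
  <= (ln delta^-1 + (1 + ln delta^-1) * \sum_(2 <= t < T.+1) l1dist (w t) (w t.-1))
       / eta T
     + c ^+ 2 / 2 * \sum_(1 <= t < T.+1) eta t.
Proof.
by apply: le_trans sum_mirror_step_regret_le _; rewrite lerD2r KL_weighted_telescope_le.
Qed.

End DynamicRegret.

Theorem theorem1 (R : realType) (K T : nat) (delta c eta0 c_eta : R)
  (z : nat -> 'I_K -> R) (ft : nat -> R)
  (what w : nat -> 'I_K -> R) :
  (2 <= K)%N -> (1 <= T)%N ->
  0 < delta -> delta <= K%:R^-1 -> 0 < c -> 0 < eta0 -> 0 < c_eta ->
  (forall t, (1 <= t <= T)%N -> in_simplex (z t)) ->
  (forall t, (1 <= t <= T)%N -> `|ft t| <= c) ->
  let g := fun t k => - ft t * z t k in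
  let eta := fun t : nat => eta0 / Num.sqrt (1 + c_eta * t%:R) in
  (forall k, what 1%N k = K%:R^-1) ->
  (forall t, (1 <= t <= T)%N ->
     is_argmin_simplex (fun x => eta t * dotp (g t) x + KL x (what t)) (what t.+1)) ->
  (forall t, (1 <= t <= T)%N -> in_trunc_simplex delta (w t)) ->
  (forall t, (1 <= t <= T.+1)%N -> in_trunc_simplex delta (what t)) ->
  let V := \sum_(2 <= t < T.+1) l1dist (w t) (w t.-1) in
  let Ld := 1 + ln (delta^-1) in
  let Rdyn := \sum_(1 <= t < T.+1) dotp (g t) (what t)
              - \sum_(1 <= t < T.+1) dotp (g t) (w t) in
  Rdyn <= Num.sqrt (1 + c_eta * T%:R) *
            ((ln (delta^-1) + Ld * V) / eta0 + c ^+ 2 * eta0 / c_eta)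
  /\ (eta0 = Num.sqrt (c_eta * (ln (delta^-1) + Ld * V)) / c ->
      Rdyn <= 2 * c * Num.sqrt ((ln (delta^-1) + Ld * V) / c_eta)
                * Num.sqrt (1 + c_eta * T%:R)).
Proof.
move=> K_ge2 T_gt0 delta_gt0 delta_le c_gt0 eta0_gt0 c_eta_gt0 z_simplex f_le g eta
  _ what_argmin w_trunc what_trunc V Ld Rdyn.
set S := Num.sqrt (1 + c_eta * T%:R).
have delta_le1 : delta <= 1.
  by apply: le_trans delta_le _; rewrite invf_le1 ?ler1n ?ltr0n //; lia.
have eta_gt0 t : 0 < eta t by rewrite divr_gt0 ?sqrt_schedule_gt0.
have eta_noninc s t : (s <= t)%N -> eta t <= eta s by exact: step_schedule_noninc.
have g_range t (ht : (1 <= t <= T)%N) :=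
  scaled_simplex_range (z_simplex t ht) (f_le t ht).
have regret := dynamic_regret_le T_gt0 delta_gt0 delta_le1 eta_gt0 eta_noninc
  g_range what_argmin w_trunc what_trunc.
have sum_eta : c ^+ 2 / 2 * \sum_(1 <= t < T.+1) eta t <= c ^+ 2 * eta0 * S / c_eta.
  have -> : c ^+ 2 * eta0 * S / c_eta = c ^+ 2 / 2 * (eta0 * (2 * S / c_eta)).
    by field; rewrite gt_eqF.
  rewrite /eta -mulr_sumr ler_wpM2l ?ler_pM2l ?sum_inv_sqrt_le //.
  by rewrite mulr_ge0 // sqr_ge0.
have bound : Rdyn <= S * ((ln delta^-1 + Ld * V) / eta0 + c ^+ 2 * eta0 / c_eta).
  by apply: le_trans regret _; rewrite invf_div -/S /Ld /V; lra.
split => // eta0E.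
by rewrite [leRHS]mulrC -(balanced_rate_eq c_gt0 c_eta_gt0 eta0_gt0 eta0E).
Qed.
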